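(* Let $(A,G)$ be an admissible pair with $A\in M_{Q_0}(\mathbb Z)$ and let $\{i_1,\ldots,i_n\}$ be a $G$-orbit in $Q_0$. Then for every permutation $\sigma\in\mathfrak S_n$, $$\mu_{i_n}\circ\cdots\circ\mu_{i_1}(A)=\mu_{i_{\sigma(n)}}\circ\cdots\circ\mu_{i_{\sigma(1)}}(A).$$
   Context: $Q_0$ finite; $A=(a_{ij})$ skew-symmetrizable ($DA$ skew-symmetric for a positive integer diagonal $D$). Mutation $\mu_k(B)=(b'_{ij})$: $b'_{ij}=-b_{ij}$ if $k\in\{i,j\}$, else $b_{ij}+\tfrac12(|b_{ik}|b_{kj}+b_{ik}|b_{kj}|)$. An automorphism of $A$ is a permutation $g$ of $Q_0$ with $a_{gi,gj}=a_{ij}$; a group $G$ of such permutations is admissible (and $(A,G)$ an admissible pair) if for distinct $i,j$ in the same $G$-orbit there is no path of length $1$ or $2$ from $i$ to $j$ in the valued quiver of $A$ (i.e. $a_{ij}\le0$ and no $k$ with $a_{ik}>0$, $a_{kj}>0$). *)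

(* Q_0 = 'I_n, integer matrices 'M[int]_n. *)
From mathcomp Require Import all_boot all_order all_algebra all_fingroup.
Set Implicit Arguments. Unset Strict Implicit. Unset Printing Implicit Defensive.
Import Order.TTheory GRing.Theory Num.Theory.
Local Open Scope ring_scope.

Definition skew_symmetrizable (n : nat) (A : 'M[int]_n) : Prop :=
  exists d : 'I_n -> int, (forall i, 0 < d i) /\
    forall i j, d i * A i j = - (d j * A j i).

(* Matrix mutation at k. Note (|b_ik| b_kj + b_ik |b_kj|)/2 is an integer. *)
Definition mutation (n : nat) (k : 'I_n) (B : 'M[int]_n) : 'M[int]_n :=
  \matrix_(i, j)
    if (i == k) || (j == k) then - B i j
    else B i j + ((`|B i k| * B k j + B i k * `|B k j|) %/ 2)%Z.

(* mu_{s_m} o ... o mu_{s_1} (A) for s = [:: s_1; ...; s_m] *)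
Definition mutate_seq (n : nat) (s : seq 'I_n) (A : 'M[int]_n) : 'M[int]_n :=
  foldl (fun B k => mutation k B) A s.

Definition is_automorphism (n : nat) (A : 'M[int]_n) (g : {perm 'I_n}) : Prop :=
  forall i j, A (g i) (g j) = A i j.

(* Admissible group: distinct i,j in the same G-orbit have no path of
   length 1 or 2 from i to j in the valued quiver. *)
Definition admissible (n : nat) (A : 'M[int]_n) (G : {group {perm 'I_n}}) : Prop :=
  (forall g, g \in G -> is_automorphism A g) /\
  forall i j, j \in orbit 'P G i -> i != j ->
    A i j <= 0 /\ ~ (exists k, 0 < A i k /\ 0 < A k j).

Definition admissible_pair (n : nat) (A : 'M[int]_n) (G : {group {perm 'I_n}}) : Prop :=
  skew_symmetrizable A /\ admissible A G.

(* Two distinct vertices of a G-orbit carry no arrow in either direction: admissibility gives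
   a_ij <= 0 and a_ji <= 0, while skew-symmetrizability forces a_ij and a_ji to have opposite
   signs, so a_ij = a_ji = 0.  Mutating at a vertex k of the orbit changes an entry b_xy only
   by a term involving b_xk and b_ky, which vanish for x, y in the orbit, so the orbit stays
   arrow-free.  Mutations at two vertices not joined by arrows commute, and hence the
   mutations along the orbit may be performed in any order. *)
From mathcomp Require Import all_boot all_order all_algebra all_fingroup.
From mathcomp Require Import zify.
Set Implicit Arguments. Unset Strict Implicit. Unset Printing Implicit Defensive.
Import Order.TTheory GRing.Theory Num.Theory.

Local Open Scope ring_scope.

Section Mutation.
Variable n : nat.
Implicit Types (B : 'M[int]_n) (S : {pred 'I_n}) (k p q : 'I_n) (s : seq 'I_n).

Lemma mutation_term0l (b : int) : ((`|0| * b + 0 * `|b|) %/ 2)%Z = 0.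
Proof. by rewrite normr0 !mul0r addr0. Qed.

Lemma mutation_term0r (a : int) : ((`|a| * 0 + a * `|0|) %/ 2)%Z = 0.
Proof. by rewrite normr0 !mulr0 addr0. Qed.

Definition unlinked S B := {in S &, forall p q, p != q -> B p q = 0}.

Lemma mutation_unlinked S B k : k \in S -> unlinked S B -> unlinked S (mutation k B).
Proof.
move=> Sk hB p q Sp Sq npq; rewrite mxE.
case: ifP => [_|/norP [npk nqk]]; first by rewrite hB // oppr0.
by rewrite hB // (hB p k) // mutation_term0l addr0.
Qed.

Lemma mutationC B k1 k2 : k1 != k2 -> B k1 k2 = 0 -> B k2 k1 = 0 ->
  mutation k1 (mutation k2 B) = mutation k2 (mutation k1 B).
Proof.
move=> n12 B12 B21; have n21 : k2 != k1 by rewrite eq_sym.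
apply/matrixP => p q; rewrite !mxE.
have [->|np1] := eqVneq p k1; last have [->|np2] := eqVneq p k2;
(have [->|nq1] := eqVneq q k1; last have [->|nq2] := eqVneq q k2);
rewrite /= ?mxE ?eqxx ?(negPf n12) ?(negPf n21) ?(negPf np1) ?(negPf nq1)
  ?(negPf np2) ?(negPf nq2) /= ?B12 ?B21 ?oppr0 ?opprK
  ?mutation_term0l ?mutation_term0r ?addr0 //.
by rewrite -!addrA [X in _ + X]addrC.
Qed.

Lemma mutate_seq_cons k s B : mutate_seq (k :: s) B = mutate_seq s (mutation k B).
Proof. by []. Qed.

Lemma mutate_seq_move_front S k s1 s2 B : unlinked S B -> k \in S -> all (mem S) s1 ->
  mutate_seq (s1 ++ k :: s2) B = mutate_seq (k :: s1 ++ s2) B.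
Proof.
elim: s1 B => [//|k' s1 IHs1] B hB Sk /andP [Sk' Ss1].
rewrite cat_cons !mutate_seq_cons IHs1 //; last exact: mutation_unlinked.
have [<-//|nkk'] := eqVneq k k'.
by rewrite mutationC ?hB // eq_sym.
Qed.

Lemma perm_mutate_seq S s s' B : unlinked S B -> all (mem S) s -> perm_eq s s' ->
  mutate_seq s B = mutate_seq s' B.
Proof.
elim: s s' B => [|k s IHs] s' B hB Ss eq_s'.
  by move: eq_s'; rewrite perm_sym => /perm_nilP ->.
case/andP: Ss => Sk Ss.
have k_s' : k \in s' by rewrite -(perm_mem eq_s') mem_head.
case/splitPr: k_s' eq_s' => s1 s2 eq_s'.
have : all (mem S) (s1 ++ k :: s2) by rewrite -(perm_all _ eq_s'); apply/andP.
rewrite all_cat => /andP[Ss1 _].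
rewrite (mutate_seq_move_front _ hB Sk Ss1) !mutate_seq_cons.
apply: IHs; [exact: mutation_unlinked | exact: Ss |].
by rewrite -(perm_cons k) (perm_trans eq_s') // -cat1s perm_catCA.
Qed.

End Mutation.

Lemma skew_symmetrizable_nonpos_eq0 n (A : 'M[int]_n) p q : skew_symmetrizable A ->
  A p q <= 0 -> A q p <= 0 -> A p q = 0.
Proof. by case=> d [dpos hd]; have := hd p q; have := dpos p; have := dpos q; lia. Qed.

Lemma admissible_pair_orbit_unlinked n (A : 'M[int]_n) (G : {group {perm 'I_n}}) i :
  admissible_pair A G -> unlinked (orbit 'P G i) A.
Proof.
case=> skewA [_ hadm] p q Gp Gq npq.
have Gpq : q \in orbit 'P G p by rewrite (orbit_trans Gq) // orbit_sym.
have Gqp : p \in orbit 'P G q by rewrite orbit_sym.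
have nqp : q != p by rewrite eq_sym.
have [Apq _] := hadm p q Gpq npq.
have [Aqp _] := hadm q p Gqp nqp.
exact: skew_symmetrizable_nonpos_eq0.
Qed.

Theorem mainTheorem9 (n : nat) (A : 'M[int]_n) (G : {group {perm 'I_n}})
  (i : 'I_n) (s s' : seq 'I_n) :
  admissible_pair A G ->
  uniq s -> (forall x, (x \in s) = (x \in orbit 'P G i)) ->
  perm_eq s s' ->
  mutate_seq s A = mutate_seq s' A.
Proof.
move=> adm _ mem_s.
apply: (perm_mutate_seq (admissible_pair_orbit_unlinked (i := i) adm)).
by apply/allP => x; rewrite mem_s.
Qed.
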